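(* Let $f:\mathbb{R}^n\to\mathbb{R}\cup\{+\infty\}$ and $g:\mathbb{R}^m\to\mathbb{R}\cup\{+\infty\}$ be proper, closed, convex functions, and let $A\in\mathbb{R}^{p\times n}$, $B\in\mathbb{R}^{p\times m}$, $c\in\mathbb{R}^p$. Consider the problem $$\min_{x\in\mathbb{R}^n,\,z\in\mathbb{R}^m} f(x)+g(z)\quad\text{subject to}\quad Ax+Bz=c,$$ and assume that the Lagrangian $\mathcal{L}_0(x,z,y)=f(x)+g(z)+y^T(Ax+Bz-c)$ has a saddle point (the min-max and max-min of $\mathcal{L}_0$ over $(x,z)\in\mathbb{R}^n\times\mathbb{R}^m$, $y\in\mathbb{R}^p$ coincide and are attained). Let $$M_0=\begin{pmatrix}0 & 0 & A^T\\ 0 & 0 & B^T\\ -A & -B & 0_{p\times p}\end{pmatrix},$$ let $L>0$ satisfy $\|M_0\|_2\le L$, and let $\eta\in(0,\frac{1}{2L})$. For arbitrary initial points $x_0,x_{-1}\in\mathbb{R}^n$, $z_0,z_{-1}\in\mathbb{R}^m$, $y_0,y_{-1}\in\mathbb{R}^p$, define for $k=0,1,2,\dots$: $$\hat x_k=x_k-2\eta A^Ty_k+\eta A^Ty_{k-1},\qquad \hat z_k=z_k-2\eta B^Ty_k+\eta B^Ty_{k-1},$$ $$x_{k+1}=\arg\min_{u\in\mathbb{R}^n}\Big(\eta f(u)+\tfrac12\|u-\hat x_k\|_2^2\Big),\qquad z_{k+1}=\arg\min_{r\in\mathbb{R}^m}\Big(\eta g(r)+\tfrac12\|r-\hat z_k\|_2^2\Big),$$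 $$y_{k+1}=y_k+2\eta Ax_k+2\eta Bz_k-\eta Ax_{k-1}-\eta Bz_{k-1}-\eta c.$$ Then $\{x_k\}$ and $\{z_k\}$ converge, and their limit $(x^*,z^* )$ is a solution of the optimization problem.
   Context: $\|\cdot\|_2$ denotes the Euclidean norm on vectors and the spectral norm (largest singular value) on matrices. *)

From HB Require Import structures.
From mathcomp Require Import all_boot all_order all_algebra.
From mathcomp Require Import all_classical all_reals all_analysis.
Set Implicit Arguments. Unset Strict Implicit. Unset Printing Implicit Defensive.
Import Order.TTheory GRing.Theory Num.Theory.
Import numFieldNormedType.Exports.
Local Open Scope classical_set_scope.
Local Open Scope ring_scope.

Definition enorm (R : realType) (n : nat) (v : 'cV[R]_n) : R :=
  Num.sqrt (\sum_(i < n) v i ord0 ^+ 2).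

Definition spec_norm (R : realType) (p q : nat) (M : 'M[R]_(p, q)) : R :=
  sup [set enorm (M *m v) | v in [set v : 'cV[R]_q | enorm v <= 1]].

Definition proper_fun (R : realType) (n : nat) (f : 'cV[R]_n -> \bar R) : Prop :=
  (forall x, f x != -oo%E) /\ (exists x, f x \is a fin_num).

(* Convexity (for functions never equal to -oo; 0 * +oo = 0 by convention). *)
Definition convex_efun (R : realType) (n : nat) (f : 'cV[R]_n -> \bar R) : Prop :=
  forall (x y : 'cV[R]_n) (t : R), 0 <= t <= 1 ->
    (f (t *: x + (1 - t) *: y)%R <= t%:E * f x + (1 - t)%:E * f y)%E.

(* Closed = lower semicontinuous (closed epigraph). *)
Definition closed_fun (R : realType) (n : nat) (f : 'cV[R]_n -> \bar R) : Prop :=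
  lower_semicontinuous f.

Definition pcc (R : realType) (n : nat) (f : 'cV[R]_n -> \bar R) : Prop :=
  [/\ proper_fun f, closed_fun f & convex_efun f].

Definition is_prox_point (R : realType) (n : nat) (h : 'cV[R]_n -> \bar R)
    (eta : R) (w u : 'cV[R]_n) : Prop :=
  forall u', (eta%:E * h u + (2^-1 * enorm (u - w)%R ^+ 2)%:E
              <= eta%:E * h u' + (2^-1 * enorm (u' - w)%R ^+ 2)%:E)%E.

Definition lagr0 (R : realType) (n m p : nat)
    (f : 'cV[R]_n -> \bar R) (g : 'cV[R]_m -> \bar R)
    (A : 'M[R]_(p, n)) (B : 'M[R]_(p, m)) (c : 'cV[R]_p)
    (x : 'cV[R]_n) (z : 'cV[R]_m) (y : 'cV[R]_p) : \bar R :=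
  (f x + g z + ((y^T *m (A *m x + B *m z - c)) ord0 ord0)%:E)%E.

Definition has_saddle_point (R : realType) (n m p : nat)
    (f : 'cV[R]_n -> \bar R) (g : 'cV[R]_m -> \bar R)
    (A : 'M[R]_(p, n)) (B : 'M[R]_(p, m)) (c : 'cV[R]_p) : Prop :=
  exists xs zs ys, forall x z y,
    (lagr0 f g A B c xs zs y <= lagr0 f g A B c xs zs ys)%E /\
    (lagr0 f g A B c xs zs ys <= lagr0 f g A B c x z ys)%E.

Definition M0 (R : realType) (n m p : nat) (A : 'M[R]_(p, n)) (B : 'M[R]_(p, m))
  : 'M[R]_(n + m + p) :=
  block_mx 0 (col_mx A^T B^T) (- row_mx A B) 0.

Definition is_solution (R : realType) (n m p : nat)
    (f : 'cV[R]_n -> \bar R) (g : 'cV[R]_m -> \bar R)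
    (A : 'M[R]_(p, n)) (B : 'M[R]_(p, m)) (c : 'cV[R]_p)
    (xs : 'cV[R]_n) (zs : 'cV[R]_m) : Prop :=
  A *m xs + B *m zs = c /\
  forall x z, A *m x + B *m z = c -> (f xs + g zs <= f x + g z)%E.

From HB Require Import structures.
From mathcomp Require Import all_boot all_order all_algebra.
From mathcomp Require Import all_classical all_reals all_analysis.
From mathcomp Require Import ring lra.
Set Implicit Arguments. Unset Strict Implicit. Unset Printing Implicit Defensive.
Import Order.TTheory GRing.Theory Num.Theory.
Import numFieldNormedType.Exports.
Local Open Scope classical_set_scope.
Local Open Scope ring_scope.

(* Stack the iterates as w_k = (x_k, z_k, y_k).  The scheme is a forward
   reflected step for the monotone inclusion 0 \in (df x dg)(x, z) + M0 w,
   where M0 is skew-symmetric with norm at most L. *)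

Definition dot (R : realType) k (u v : 'cV[R]_k) : R := (u^T *m v) ord0 ord0.

Section EuclideanGeometry.
Variables (R : realType) (k : nat).
Implicit Types (u v w : 'cV[R]_k) (a : R).

Lemma dotE u v : dot u v = \sum_i u i ord0 * v i ord0.
Proof. by rewrite /dot mxE; apply: eq_bigr => i _; rewrite mxE. Qed.

Lemma dotC u v : dot u v = dot v u.
Proof. by rewrite !dotE; apply: eq_bigr => i _; rewrite mulrC. Qed.

Lemma dotDl u v w : dot (u + v) w = dot u w + dot v w.
Proof. by rewrite !dotE -big_split; apply: eq_bigr => i _; rewrite mxE mulrDl. Qed.

Lemma dotNl u w : dot (- u) w = - dot u w.
Proof. by rewrite !dotE -sumrN; apply: eq_bigr => i _; rewrite mxE mulNr. Qed.

Lemma dotZl a u w : dot (a *: u) w = a * dot u w.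
Proof. by rewrite !dotE mulr_sumr; apply: eq_bigr => i _; rewrite mxE mulrA. Qed.

Lemma dotDr u v w : dot w (u + v) = dot w u + dot w v.
Proof. by rewrite dotC dotDl !(dotC w). Qed.

Lemma dotNr u w : dot w (- u) = - dot w u.
Proof. by rewrite dotC dotNl dotC. Qed.

Lemma dotZr a u w : dot w (a *: u) = a * dot w u.
Proof. by rewrite dotC dotZl dotC. Qed.

Lemma dotBl u v w : dot (u - v) w = dot u w - dot v w.
Proof. by rewrite dotDl dotNl. Qed.

Lemma dotBr u v w : dot w (u - v) = dot w u - dot w v.
Proof. by rewrite dotDr dotNr. Qed.

Lemma dot0l w : dot 0 w = 0.
Proof. by rewrite dotE big1 // => i _; rewrite mxE mul0r. Qed.

Lemma dot0r w : dot w 0 = 0.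
Proof. by rewrite dotC dot0l. Qed.

Lemma dot_ge0 u : 0 <= dot u u.
Proof. by rewrite dotE sumr_ge0 // => i _; rewrite -expr2 sqr_ge0. Qed.

Lemma dot_eq0 u : dot u u = 0 -> u = 0.
Proof.
rewrite dotE => /eqP; rewrite psumr_eq0 => [/allP H|i _]; last first.
  by rewrite -expr2 sqr_ge0.
apply/matrixP => i j; rewrite ord1 mxE.
by have := H i (mem_index_enum _); rewrite /= mulf_eq0 orbb => /eqP.
Qed.

Lemma cauchy_schwarz u v : dot u v ^+ 2 <= dot u u * dot v v.
Proof.
have [v0|vn0] := eqVneq (dot v v) 0.
  by rewrite v0 (dot_eq0 v0) dot0r expr0n /= mulr0.
have vp : 0 < dot v v by rewrite lt_def vn0 dot_ge0.
set t := dot u v / dot v v.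
have H := dot_ge0 (u - t *: v).
rewrite dotBl !dotBr !dotZl !dotZr (dotC v u) in H.
have tb : t * dot v v = dot u v by rewrite /t mulfVK.
nra.
Qed.

Lemma enormE u : enorm u = Num.sqrt (dot u u).
Proof. by rewrite /enorm dotE; congr Num.sqrt; apply: eq_bigr => i _; rewrite expr2. Qed.

Lemma enorm_ge0 u : 0 <= enorm u.
Proof. by rewrite enormE sqrtr_ge0. Qed.

Lemma enorm_sq u : enorm u ^+ 2 = dot u u.
Proof. by rewrite enormE sqr_sqrtr // dot_ge0. Qed.

Lemma enorm_eq0 u : enorm u = 0 -> u = 0.
Proof. by move=> e; apply: dot_eq0; rewrite -enorm_sq e expr0n. Qed.

Lemma enorm_le_sq u t : 0 <= t -> dot u u <= t ^+ 2 -> enorm u <= t.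
Proof. by move=> t0 h; rewrite -(ler_pXn2r (n := 2)) ?nnegrE ?enorm_ge0 // enorm_sq. Qed.

Lemma dot_le u v : `|dot u v| <= enorm u * enorm v.
Proof.
rewrite !enormE -sqrtrM ?dot_ge0 // -sqrtr_sqr ler_sqrt ?cauchy_schwarz //.
by rewrite mulr_ge0 ?dot_ge0.
Qed.

Lemma dot_le' u v : dot u v <= enorm u * enorm v.
Proof. exact: le_trans (ler_norm _) (dot_le u v). Qed.

Lemma enormD u v : enorm (u + v) <= enorm u + enorm v.
Proof.
rewrite -(ler_pXn2r (n := 2)) ?nnegrE ?addr_ge0 ?enorm_ge0 //.
rewrite enorm_sq dotDl !dotDr (dotC v u) sqrrD !enorm_sq.
have := dot_le' u v; nra.
Qed.

Lemma enormZ a u : enorm (a *: u) = `|a| * enorm u.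
Proof.
by rewrite !enormE dotZl dotZr mulrA -expr2 sqrtrM ?sqr_ge0 // sqrtr_sqr.
Qed.

Lemma enormN u : enorm (- u) = enorm u.
Proof. by rewrite !enormE dotNl dotNr opprK. Qed.

Lemma enormB u v : enorm (u - v) <= enorm u + enorm v.
Proof. by rewrite -(enormN v) enormD. Qed.

Lemma enorm_entry u i : `|u i ord0| <= enorm u.
Proof.
rewrite /enorm -sqrtr_sqr ler_sqrt; last by rewrite sumr_ge0 // => j _; rewrite sqr_ge0.
by rewrite (bigD1 i) //= lerDl sumr_ge0 // => j _; exact: sqr_ge0.
Qed.

(* The Euclidean norm dominates the sup norm giving the topology of 'cV_k. *)
Lemma mxnorm_le_enorm u : `|u| <= enorm u.
Proof.
change (mx_norm u <= enorm u); rewrite mx_normrE; apply: bigmax_le => [|[i j] _ /=].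
  exact: enorm_ge0.
by rewrite ord1 enorm_entry.
Qed.

Lemma cvg_enorm (V : nat -> 'cV[R]_k) v :
  (forall e, 0 < e -> exists N, forall j, (N <= j)%N -> enorm (V j - v) <= e) ->
  V @ \oo --> v.
Proof.
move=> H; apply/cvgrPdist_le => e e0; have [N HN] := H e e0.
exists N => // j /= Nj; rewrite distrC.
exact: le_trans (mxnorm_le_enorm _) (HN j Nj).
Qed.

End EuclideanGeometry.

Lemma dot_mulmx (R : realType) k l (M : 'M[R]_(k, l)) u v :
  dot (M *m u) v = dot u (M^T *m v).
Proof. by rewrite /dot trmx_mul mulmxA. Qed.

Lemma dot_col (R : realType) k l (a c : 'cV[R]_k) (b d : 'cV[R]_l) :
  dot (col_mx a b) (col_mx c d) = dot a c + dot b d.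
Proof.
rewrite !dotE big_split_ord /=; congr (_ + _); apply: eq_bigr => i _.
  by rewrite !col_mxEu.
by rewrite !col_mxEd.
Qed.

Lemma col_sub (R : realType) k l (a c : 'cV[R]_k) (b d : 'cV[R]_l) :
  col_mx a b - col_mx c d = col_mx (a - c) (b - d).
Proof. by rewrite opp_col_mx add_col_mx. Qed.

Lemma enorm_col_sq (R : realType) k l (a : 'cV[R]_k) (b : 'cV[R]_l) :
  enorm (col_mx a b) ^+ 2 = enorm a ^+ 2 + enorm b ^+ 2.
Proof. by rewrite !enorm_sq dot_col. Qed.

Lemma enorm_colu (R : realType) k l (a : 'cV[R]_k) (b : 'cV[R]_l) :
  enorm a <= enorm (col_mx a b).
Proof. by rewrite -(ler_pXn2r (n := 2)) ?nnegrE ?enorm_ge0 // enorm_col_sq lerDl sqr_ge0. Qed.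

Lemma enorm_cold (R : realType) k l (a : 'cV[R]_k) (b : 'cV[R]_l) :
  enorm b <= enorm (col_mx a b).
Proof. by rewrite -(ler_pXn2r (n := 2)) ?nnegrE ?enorm_ge0 // enorm_col_sq lerDr sqr_ge0. Qed.

Lemma enorm_block3 (R : realType) k l q (a : 'cV[R]_k) (b : 'cV[R]_l) (c : 'cV[R]_q) :
  [/\ enorm a <= enorm (col_mx (col_mx a b) c),
      enorm b <= enorm (col_mx (col_mx a b) c)
    & enorm c <= enorm (col_mx (col_mx a b) c)].
Proof.
split; last exact: enorm_cold.
  exact: le_trans (enorm_colu a b) (enorm_colu _ c).
exact: le_trans (enorm_cold a b) (enorm_colu _ c).
Qed.

(* ||M v|| <= ||M||_2 ||v||: the supremum defining spec_norm is finite and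
   bounds every normalized image. *)
Lemma spec_bound (R : realType) a b (M : 'M[R]_(a, b)) (v : 'cV[R]_b) :
  enorm (M *m v) <= spec_norm M * enorm v.
Proof.
have ub : has_ubound [set enorm (M *m v) | v in [set v : 'cV[R]_b | enorm v <= 1]].
  exists (Num.sqrt (\sum_i dot (row i M)^T (row i M)^T)) => _ [u /= u1 <-].
  rewrite /enorm ler_sqrt; last by rewrite sumr_ge0 // => i _; rewrite dot_ge0.
  apply: ler_sum => i _.
  have -> : (M *m u) i ord0 = dot (row i M)^T u.
    by rewrite dotE mxE; apply: eq_bigr => j _; rewrite !mxE.
  apply: le_trans (cauchy_schwarz _ _) _.
  by rewrite ler_piMr ?dot_ge0 // -enorm_sq expr_le1 // enorm_ge0.
have [v0|vn0] := eqVneq (enorm v) 0.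
  by rewrite v0 mulr0 (enorm_eq0 v0) mulmx0 enormE dot0l sqrtr0.
have vp : 0 < enorm v by rewrite lt_def vn0 enorm_ge0.
have H : enorm (M *m ((enorm v)^-1 *: v)) <= spec_norm M.
  apply: (ub_le_sup ub); exists ((enorm v)^-1 *: v) => //=.
  by rewrite enormZ ger0_norm ?invr_ge0 ?enorm_ge0 // mulVf.
rewrite -scalemxAr enormZ ger0_norm ?invr_ge0 ?enorm_ge0 // in H.
by rewrite -ler_pdivrMr // mulrC.
Qed.

Section SkewOperator.
Variables (R : realType) (k : nat) (M : 'M[R]_k) (L : R).
Hypothesis M_skew : forall u v, dot (M *m u) v = - dot u (M *m v).
Hypothesis M_bound : forall v, enorm (M *m v) <= L * enorm v.
Hypothesis L_ge0 : 0 <= L.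

Lemma skew_dot_self u : dot (M *m u) u = 0.
Proof.
have := M_skew u u; rewrite (dotC u) => /eqP.
by rewrite -subr_eq0 opprK -mulr2n mulrn_eq0 /= => /eqP.
Qed.

(* Cauchy-Schwarz and Young bound on the cross term: 2 |<M a, b>| <= L (|a|^2 + |b|^2). *)
Lemma cross_bound a b : 2 * `|dot (M *m a) b| <= L * (dot a a + dot b b).
Proof.
apply: le_trans (ler_wpM2l _ (dot_le _ _)) _ => //.
have := M_bound a; have := enorm_ge0 b; have := enorm_ge0 a.
have := enorm_ge0 (M *m a); rewrite -!enorm_sq => g2 g0 g1 b0.
have h1 : 0 <= (L * enorm a - enorm (M *m a)) * enorm b.
  by apply: mulr_ge0 => //; rewrite subr_ge0.
have h2 : 0 <= L * (enorm a - enorm b) ^+ 2 by rewrite mulr_ge0 ?sqr_ge0.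
nra.
Qed.

(* With e1 = w_(k+1) - w*, d0 = w_(k+1) - w_k,
   d1 = w_(k+2) - w_(k+1), the monotonicity inequality (the hypothesis) makes
   |e|^2 - 2 eta <M d, e> + eta L |d|^2 decrease by (1 - 2 eta L) |d1|^2. *)
Lemma lyap_step (eta : R) (e1 d0 d1 : 'cV[R]_k) : 0 < eta ->
  dot (d1 + eta *: (M *m e1) + eta *: (M *m d0)) (e1 + d1) <= 0 ->
  dot (e1 + d1) (e1 + d1) - 2 * eta * dot (M *m d1) (e1 + d1)
     + eta * L * dot d1 d1 + (1 - 2 * eta * L) * dot d1 d1
  <= dot e1 e1 - 2 * eta * dot (M *m d0) e1 + eta * L * dot d0 d0.
Proof.
move=> etap H.
have Hb := cross_bound d0 d1.
have Hn := ler_norm (- dot (M *m d0) d1); rewrite normrN in Hn.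
move: H; rewrite !dotDl !dotDr !dotZl !skew_dot_self.
rewrite (M_skew e1 d1) (dotC e1 (M *m d1)) (dotC e1 d1).
have := ler_wpM2l (ltW etap) Hb; have := ler_wpM2l (ltW etap) Hn.
lra.
Qed.

End SkewOperator.

Section SkewM0.
Variables (R : realType) (n m p : nat) (A : 'M[R]_(p, n)) (B : 'M[R]_(p, m)).

Lemma M0_skew u v : dot (M0 A B *m u) v = - dot u (M0 A B *m v).
Proof.
have M0_tr : (M0 A B)^T = - M0 A B.
  rewrite /M0; have -> : row_mx A B = (col_mx A^T B^T)^T by rewrite tr_col_mx !trmxK.
  rewrite tr_block_mx opp_block_mx !trmx0 !oppr0 opprK.
  by rewrite [(- _)^T]linearN /= trmxK.
by rewrite dot_mulmx M0_tr mulNmx dotNr.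
Qed.

Lemma M0_col (x : 'cV[R]_n) (z : 'cV[R]_m) (y : 'cV[R]_p) :
  M0 A B *m col_mx (col_mx x z) y =
  col_mx (col_mx (A^T *m y) (B^T *m y)) (- (A *m x + B *m z)).
Proof.
by rewrite /M0 mul_block_col !mul0mx add0r addr0 mul_col_mx mulNmx mul_row_col.
Qed.

Lemma M0_block_bounds (L : R) :
  (forall v, enorm (M0 A B *m v) <= L * enorm v) ->
  [/\ forall y, enorm (A^T *m y) <= L * enorm y,
      forall y, enorm (B^T *m y) <= L * enorm y
    & forall x z (y : 'cV[R]_p), enorm (A *m x + B *m z) <= L * enorm (col_mx (col_mx x z) y)].
Proof.
move=> bnd.
have e00 y : enorm (col_mx (col_mx (0 : 'cV[R]_n) (0 : 'cV[R]_m)) y) = enorm y.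
  by rewrite !enormE !dot_col !dot0l !add0r.
have dual y : enorm (col_mx (A^T *m y) (B^T *m y)) <= L * enorm y.
  have := bnd (col_mx (col_mx 0 0) y); rewrite M0_col e00.
  by apply: le_trans; exact: enorm_colu.
split=> [y|y|x z y].
- exact: le_trans (enorm_colu _ _) (dual y).
- exact: le_trans (enorm_cold _ _) (dual y).
- have := bnd (col_mx (col_mx x z) y); rewrite M0_col; apply: le_trans.
  by rewrite -enormN; exact: enorm_cold.
Qed.

End SkewM0.

Lemma le_of_le_addt (R : realType) (x y c : R) : 0 <= c ->
  (forall t, 0 < t -> t <= 1 -> x <= y + t * c) -> x <= y.
Proof.
move=> c0 H; apply/ler_addgt0Pr => e e0.
pose t := Num.min 1 (e / (c + 1)).
have t0 : 0 < t by rewrite lt_min ltr01 divr_gt0 // ltr_wpDl.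
have t1 : t <= 1 by rewrite ge_min lexx.
apply: le_trans (H t t0 t1) _; rewrite lerD2l.
have : t <= e / (c + 1) by rewrite ge_min lexx orbT.
rewrite ler_pdivlMr ?ltr_wpDl // => h; nra.
Qed.

Lemma le0_of_le_scaled (R : realType) (x K : R) : 0 <= K ->
  (forall d, 0 < d -> x <= K * d) -> x <= 0.
Proof.
move=> K0 H; apply/ler_addgt0Pr => e e0; rewrite add0r.
apply: le_trans (H (e / (K + 1)) _) _; first by rewrite divr_gt0 //; lra.
rewrite mulrA ler_pdivrMr; last lra.
nra.
Qed.

(* A nonincreasing nonnegative sequence converges, so its gaps become small. *)
Lemma nonincreasing_gaps_small (R : realType) (u : nat -> R) :
  (forall k, u k.+1 <= u k) -> (forall k, 0 <= u k) ->
  forall e, 0 < e -> exists N, forall k, (N <= k)%N -> u k - u k.+1 <= e.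
Proof.
move=> dec pos e e0.
have lb : has_lbound (range u) by exists 0 => _ [k _ <-].
have := nonincreasing_cvgn (iffLR (nonincreasing_seqP u) dec) lb.
move/cvgrPdist_le => /(_ (e / 2)); rewrite divr_gt0 // => /(_ isT) [N _ HN].
exists N => k Nk; have h1 := HN k Nk; have h2 := HN k.+1 (leqW Nk).
by move: h1 h2; rewrite /=; set l := inf _; rewrite !ler_norml; lra.
Qed.

Lemma entry_le_mxnorm (R : realType) a b (M : 'M[R]_(a, b)) i j : `|M i j| <= `|M|.
Proof.
change (`|M i j| <= mx_norm M); rewrite mx_normrE.
exact: (le_bigmax 0 (fun ij : 'I_a * 'I_b => `|M ij.1 ij.2|) (i, j)).
Qed.

Lemma bounded_cluster_point (R : realType) k (V : nat -> 'cV[R]_k) (C : R) :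
  (forall j, enorm (V j) <= C) ->
  exists vb, forall d, 0 < d -> forall N, exists j, (N <= j)%N /\ enorm (V j - vb) <= d.
Proof.
move=> HC; pose rv := fun j => (V j)^T.
pose S := [set v : 'rV[R]_k | forall i, `[- C, C]%classic (v ord0 i)].
have cS : compact S.
  by apply: (@rV_compact _ _ (fun=> `[- C, C]%classic)) => i; exact: segment_compact.
have FS : (rv @ \oo) S.
  exists 0%N => // j _ i /=; rewrite mxE in_itv /= -ler_norml.
  exact: le_trans (enorm_entry _ _) (HC j).
have [vr [_ cl]] := cS _ _ FS.
exists vr^T => d d0 N.
pose e := d / (k.+1)%:R.
have e0 : 0 < e by rewrite divr_gt0.
have ek : e * (k.+1)%:R = d by rewrite /e mulfVK.
clearbody e.
have FA : (rv @ \oo) (rv @` [set j | (N <= j)%N]) by exists N => // j Nj; exists j.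
have [_ [[j Nj <-] hb]] := cl _ _ FA (nbhsx_ballx vr e e0).
exists j; split => //.
move: hb; rewrite mx_norm_ball /ball_ /= => hb.
rewrite /enorm -(ger0_norm (ltW d0)) -sqrtr_sqr ler_sqrt ?sqr_ge0 //.
apply: le_trans (_ : \sum_(i < k) e ^+ 2 <= _).
  apply: ler_sum => i _; rewrite !mxE -real_normK ?num_real //.
  rewrite lerXn2r ?nnegrE ?normr_ge0 ?ltW //.
  apply: le_lt_trans hb; rewrite distrC.
  by have := entry_le_mxnorm (vr - rv j) ord0 i; rewrite /rv !mxE.
rewrite sumr_const card_ord -ek exprMn -[e ^+ 2 *+ k]mulr_natr; apply: ler_wpM2l.
  exact: sqr_ge0.
rewrite -natrX ler_nat expnS.
by apply: leq_trans (leqnSn _) (leq_pmulr _ _); rewrite expn_gt0.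
Qed.

Lemma lsc_le_of_approx (R : realType) k (h : 'cV[R]_k -> \bar R) ub (r K0 : R) :
  lower_semicontinuous h -> 0 <= K0 ->
  (forall d, 0 < d -> d <= 1 -> exists u, enorm (u - ub) <= d /\
       h u \is a fin_num /\ fine (h u) <= r + K0 * d) ->
  (h ub <= r%:E)%E.
Proof.
move=> lsc K0p H; rewrite leNgt; apply/negP => hr.
have [a [ra ah]] : exists a, r < a /\ (a%:E < h ub)%E.
  move: hr; case: (h ub) => [t| |] //.
  - rewrite lte_fin => rt; exists ((r + t) / 2); split; rewrite ?lte_fin; lra.
  - by move=> _; exists (r + 1); split; [lra | exact: ltry].
have [V hV HV] := lsc ub a ah.
have [e e0 he] := (nbhs_ballP _ _).1 hV.
pose d := Num.min (Num.min 1 (e / 2)) ((a - r) / (K0 + 1)).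
have d0 : 0 < d by rewrite !lt_min ltr01 !divr_gt0 //; lra.
have d1 : d <= 1 by rewrite !ge_min lexx.
have de : d <= e / 2 by rewrite !ge_min lexx orbT.
have dK : d <= (a - r) / (K0 + 1) by rewrite !ge_min lexx !orbT.
have [u [hu [hfin hle]]] := H d d0 d1.
have Vu : V u.
  apply: he; rewrite mx_norm_ball /ball_ /= -normrN opprB.
  apply: le_lt_trans (mxnorm_le_enorm _) _; apply: le_lt_trans hu _; lra.
have := HV u Vu; rewrite -(fineK hfin) lte_fin.
move: dK; rewrite ler_pdivlMr; last lra.
by move=> dK; nra.
Qed.

Local Open Scope ereal_scope.

(* The proximal point u of h at w satisfies the variational inequality
   <w - u, v - u> <= eta (h v - h u), i.e. (w - u)/eta is a subgradient at u. *)
Lemma prox_vi (R : realType) k (h : 'cV[R]_k -> \bar R) (eta : R) (w u : 'cV[R]_k) :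
  proper_fun h -> convex_efun h -> (0 < eta)%R -> is_prox_point h eta w u ->
  h u \is a fin_num /\ forall v, h v \is a fin_num ->
    (dot (w - u) (v - u) <= eta * (fine (h v) - fine (h u)))%R.
Proof.
move=> [hN [x0 hx0]] hc etap Hp.
have hu : h u \is a fin_num.
  rewrite fin_numE hN /=; apply/negP => /eqP hu.
  have := Hp x0; rewrite hu mulry gtr0_sg // mul1e addye //.
  by rewrite -(fineK hx0) -EFinM -EFinD leye_eq.
split => // v hv.
move: (fineK hu) (fineK hv); set a := fine (h u); set b := fine (h v) => ea eb.
apply: (@le_of_le_addt _ _ _ (2^-1 * dot (v - u) (v - u))%R).
  by rewrite mulr_ge0 ?dot_ge0 // invr_ge0.
move=> t t0 t1; pose u' := (t *: v + (1 - t) *: u)%R.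
have hcu := hc v u t; rewrite t1 ltW //= in hcu.
have := hcu isT; rewrite -ea -eb -!EFinM -EFinD => hcu'.
have hu'fin : h u' \is a fin_num.
  by rewrite fin_numE hN /=; apply/negP => /eqP e; move: hcu'; rewrite /u' e leye_eq.
move: (fineK hu'fin); set c := fine (h u') => ec.
rewrite /u' -ec lee_fin in hcu'.
have := Hp u'; rewrite -ea -ec -!EFinM -!EFinD lee_fin -!enorm_sq !enormE.
rewrite !sqr_sqrtr ?dot_ge0 // /u'.
have -> : (t *: v + (1 - t) *: u - w = (u - w) + t *: (v - u))%R.
  by rewrite scalerBl scale1r scalerBr; apply/matrixP => i j; rewrite !mxE; ring.
have -> : dot (w - u) (v - u) = (- dot (u - w) (v - u))%R by rewrite -dotNl opprB.
set e := (u - w)%R; set d := (v - u)%R => H; clearbody e d.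
rewrite dotDl !dotDr !dotZl !dotZr (dotC d e) in H.
have Hs : (0 <= dot d d)%R by rewrite dot_ge0.
suff : (t * (- dot e d - (eta * (b - a) + t * (2^-1 * dot d d))) <= 0)%R.
  by rewrite pmulr_rle0 // subr_le0.
nra.
Qed.

Local Close Scope ereal_scope.

(* Stability of the proximal variational inequality: if ub is approximated by
   proximal points u of h at w with w - u = -eta v + O(|u - ub|), then v is a
   subgradient of h at ub. *)
Lemma prox_limit (R : realType) k (h : 'cV[R]_k -> \bar R) (eta K : R) (ub v : 'cV[R]_k) :
  pcc h -> 0 < eta -> 0 <= K ->
  (forall d, 0 < d -> exists w u, [/\ is_prox_point h eta w u,
       enorm (u - ub) <= d & enorm (w - u + eta *: v) <= K * d]) ->
  forall x, h x \is a fin_num -> (h ub <= (fine (h x) + dot v (x - ub))%:E)%E.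
Proof.
move=> [hp hlsc hc] etap K0 approx x hx.
pose C := enorm v + K * (enorm (x - ub) + 1) / eta.
have C0 : 0 <= C.
  apply: addr_ge0 (enorm_ge0 _) (divr_ge0 (mulr_ge0 K0 _) (ltW etap)).
  exact: addr_ge0 (enorm_ge0 _) ler01.
apply: (lsc_le_of_approx hlsc C0) => d d0 d1.
have [w [u [hprox hu hq]]] := approx d d0.
have [hufin vi] := prox_vi hp hc etap hprox.
exists u; split => //; split => //.
have VI := vi x hx; set q := w - u + eta *: v in hq.
have wuE : w - u = q - eta *: v by rewrite /q addrK.
rewrite wuE dotBl dotZl in VI.
have split_dot : dot v (x - u) = dot v (x - ub) + dot v (ub - u).
  by rewrite -dotDr addrA subrK.
have b1 : dot v (ub - u) <= enorm v * d.
  apply: le_trans (dot_le' _ _) (ler_wpM2l (enorm_ge0 _) _).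
  by rewrite -opprB enormN.
have hxu : enorm (x - u) <= enorm (x - ub) + 1.
  have -> : x - u = (x - ub) + (ub - u) by rewrite addrA subrK.
  by apply: le_trans (enormD _ _) _; rewrite lerD2l -enormN opprB; lra.
have b2 : - dot q (x - u) <= K * d * (enorm (x - ub) + 1).
  apply: le_trans (ler_norm _) _; rewrite normrN.
  by apply: le_trans (dot_le _ _) _; apply: ler_pM => //; exact: enorm_ge0.
rewrite -(ler_pM2l etap).
have -> : (eta * (fine (h x) + dot v (x - ub) + C * d) =
   eta * fine (h x) + eta * dot v (x - ub) + eta * enorm v * d
   + K * d * (enorm (x - ub) + 1)).
  by rewrite /C; field; rewrite gt_eqF.
have := ler_wpM2l (ltW etap) b1.
by rewrite split_dot in VI; lra.
Qed.

Definition kkt_point (R : realType) (n m p : nat)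
    (f : 'cV[R]_n -> \bar R) (g : 'cV[R]_m -> \bar R)
    (A : 'M[R]_(p, n)) (B : 'M[R]_(p, m)) (c : 'cV[R]_p)
    (xs : 'cV[R]_n) (zs : 'cV[R]_m) (ys : 'cV[R]_p) : Prop :=
  [/\ f xs \is a fin_num, g zs \is a fin_num, A *m xs + B *m zs = c,
   (forall x, f x \is a fin_num -> fine (f xs) <= fine (f x) + dot (A^T *m ys) (x - xs)) &
   (forall z, g z \is a fin_num -> fine (g zs) <= fine (g z) + dot (B^T *m ys) (z - zs))].

Section KKT.
Variables (R : realType) (n m p : nat) (f : 'cV[R]_n -> \bar R) (g : 'cV[R]_m -> \bar R)
  (A : 'M[R]_(p, n)) (B : 'M[R]_(p, m)) (c : 'cV[R]_p).
Hypotheses (hf : proper_fun f) (hg : proper_fun g).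

(* A saddle point of the Lagrangian is a KKT point: maximality in y forces
   feasibility, minimality in x and z gives the subgradient inequalities. *)
Lemma saddle_kkt : has_saddle_point f g A B c -> exists xs zs ys, kkt_point f g A B c xs zs ys.
Proof.
move=> [xs [zs [ys H]]].
case: hf => [fN [x0 fx0]]; case: hg => [gN [z0 gz0]].
have fxs : f xs \is a fin_num.
  rewrite fin_numE fN /=; apply/negP => /eqP E.
  have := (H x0 z0 ys).2; rewrite /lagr0 E addye ?gN // addye //.
  by rewrite -(fineK fx0) -(fineK gz0) -!EFinD leye_eq.
have gzs : g zs \is a fin_num.
  rewrite fin_numE gN /=; apply/negP => /eqP E.
  have := (H x0 z0 ys).2; rewrite /lagr0 E addey ?fN // addye //.
  by rewrite -(fineK fx0) -(fineK gz0) -!EFinD leye_eq.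
have fe (a b : 'cV[R]_p) : (a^T *m b) ord0 ord0 = dot a b by [].
set s := A *m xs + B *m zs - c.
have s0 : s = 0.
  have := (H xs zs (ys + s)).1; rewrite /lagr0 !fe -/s.
  rewrite -(fineK fxs) -(fineK gzs) -!EFinD lee_fin dotDl.
  move=> h; apply: dot_eq0; apply/eqP; rewrite eq_le dot_ge0 andbT; lra.
have Hc : A *m xs + B *m zs = c by apply/eqP; rewrite -subr_eq0 -/s s0.
exists xs, zs, ys; split => // [x fx|z gz].
- have h := (H x zs ys).2; rewrite /lagr0 !fe -/s s0 dot0r in h.
  rewrite -(fineK fxs) -(fineK gzs) -(fineK fx) -!EFinD lee_fin in h.
  have e : A *m x + B *m zs - c = A *m (x - xs).
    by rewrite -Hc mulmxBr; apply/matrixP => i j; rewrite !mxE; ring.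
  by rewrite e -(trmxK A) -dot_mulmx in h; lra.
- have h := (H xs z ys).2; rewrite /lagr0 !fe -/s s0 dot0r in h.
  rewrite -(fineK fxs) -(fineK gzs) -(fineK gz) -!EFinD lee_fin in h.
  have e : A *m xs + B *m z - c = B *m (z - zs).
    by rewrite -Hc mulmxBr; apply/matrixP => i j; rewrite !mxE; ring.
  by rewrite e -(trmxK B) -dot_mulmx in h; lra.
Qed.

(* Every KKT point solves the constrained problem: for feasible (x, z) the
   two subgradient terms sum to <ys, A (x - xs) + B (z - zs)> = 0. *)
Lemma kkt_solution xs zs ys : kkt_point f g A B c xs zs ys -> is_solution f g A B c xs zs.
Proof.
move=> [fxs gzs Hc Hf Hg]; split => // x z Hxz.
case: hf => fN _; case: hg => gN _.
have [fx|fx] := boolP (f x \is a fin_num); last first.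
  move: fx; rewrite fin_numE fN /= negbK => /eqP ->; rewrite addye ?gN //; exact: leey.
have [gz|gz] := boolP (g z \is a fin_num); last first.
  move: gz; rewrite fin_numE gN /= negbK => /eqP ->; rewrite addey ?fN //; exact: leey.
rewrite -(fineK fxs) -(fineK gzs) -(fineK fx) -(fineK gz) -!EFinD lee_fin.
have h1 := Hf x fx; have h2 := Hg z gz.
have : dot (A^T *m ys) (x - xs) + dot (B^T *m ys) (z - zs) = 0.
  rewrite dotC (dotC (B^T *m ys)) -!dot_mulmx -dotDl !mulmxBr addrACA.
  by rewrite -opprD Hxz Hc subrr dot0l.
lra.
Qed.

End KKT.

Section Iteration.
Variables (R : realType) (n m p : nat) (f : 'cV[R]_n -> \bar R) (g : 'cV[R]_m -> \bar R)
  (A : 'M[R]_(p, n)) (B : 'M[R]_(p, m)) (c : 'cV[R]_p) (L eta : R)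
  (X : nat -> 'cV[R]_n) (Z : nat -> 'cV[R]_m) (Y : nat -> 'cV[R]_p).
Hypotheses (hf : pcc f) (hg : pcc g) (Lp : 0 < L) (hL : spec_norm (M0 A B) <= L)
  (etap : 0 < eta) (etaL : eta < (2 * L)^-1).
Hypothesis HX : forall k, is_prox_point f eta
      (X k.+1 - (2 * eta) *: (A^T *m Y k.+1) + eta *: (A^T *m Y k)) (X k.+2).
Hypothesis HZ : forall k, is_prox_point g eta
      (Z k.+1 - (2 * eta) *: (B^T *m Y k.+1) + eta *: (B^T *m Y k)) (Z k.+2).
Hypothesis HY : forall k, Y k.+2 = Y k.+1 + (2 * eta) *: (A *m X k.+1) + (2 * eta) *: (B *m Z k.+1)
                      - eta *: (A *m X k) - eta *: (B *m Z k) - eta *: c.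

Local Notation M := (M0 A B).

Definition W k := col_mx (col_mx (X k) (Z k)) (Y k).
Definition D k := W k.+1 - W k.

Lemma W_dist_blocks k xs zs ys :
  [/\ enorm (X k - xs) <= enorm (W k - col_mx (col_mx xs zs) ys),
      enorm (Z k - zs) <= enorm (W k - col_mx (col_mx xs zs) ys)
    & enorm (Y k - ys) <= enorm (W k - col_mx (col_mx xs zs) ys)].
Proof. by rewrite /W !col_sub; exact: enorm_block3. Qed.

Lemma M_bound v : enorm (M *m v) <= L * enorm v.
Proof. exact: le_trans (spec_bound _ _) (ler_wpM2r (enorm_ge0 _) hL). Qed.

Lemma etaL_half : eta * L < 2^-1.
Proof.
move: etaL; rewrite -div1r ltr_pdivlMr ?mulr_gt0 // => h.
by rewrite -div1r ltr_pdivlMr //; lra.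
Qed.

(* Monotonicity of the iteration with respect to a KKT point: the inequality
   required by lyap_step, combining the prox and KKT subgradient inequalities. *)
Lemma step_monotone xs zs ys : kkt_point f g A B c xs zs ys -> forall k,
  dot (D k.+1 + eta *: (M *m (W k.+1 - col_mx (col_mx xs zs) ys)) + eta *: (M *m D k))
      (W k.+2 - col_mx (col_mx xs zs) ys) <= 0.
Proof.
move=> [fx gz Hc Hf Hg] k.
case: hf => fp _ fc; case: hg => gp _ gc.
have [fX2 vx] := prox_vi fp fc etap (HX k).
have [gZ2 vz] := prox_vi gp gc etap (HZ k).
have ix := vx xs fx; have jx := Hf (X k.+2) fX2.
have iz := vz zs gz; have jz := Hg (Z k.+2) gZ2.
rewrite /D /W !col_sub !M0_col !scale_col_mx !add_col_mx !dot_col.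
set xh := (X k.+1 - _ + _) in ix; set zh := (Z k.+1 - _ + _) in iz.
have -> : Y k.+2 - Y k.+1 + eta *: - (A *m (X k.+1 - xs) + B *m (Z k.+1 - zs)) +
    eta *: - (A *m (X k.+1 - X k) + B *m (Z k.+1 - Z k)) = 0.
  by rewrite HY -Hc !mulmxBr; apply/matrixP => i j; rewrite !mxE; ring.
have -> : X k.+2 - X k.+1 + eta *: (A^T *m (Y k.+1 - ys)) + eta *: (A^T *m (Y k.+1 - Y k))
   = - (xh - X k.+2) - eta *: (A^T *m ys).
  by rewrite /xh !mulmxBr; apply/matrixP => i j; rewrite !mxE; ring.
have -> : Z k.+2 - Z k.+1 + eta *: (B^T *m (Y k.+1 - ys)) + eta *: (B^T *m (Y k.+1 - Y k))
   = - (zh - Z k.+2) - eta *: (B^T *m ys).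
  by rewrite /zh !mulmxBr; apply/matrixP => i j; rewrite !mxE; ring.
rewrite dot0l addr0 !dotBl !dotNl !dotZl.
have ex : dot (xh - X k.+2) (X k.+2 - xs) = - dot (xh - X k.+2) (xs - X k.+2).
  by rewrite -dotNr opprB.
have ez : dot (zh - Z k.+2) (Z k.+2 - zs) = - dot (zh - Z k.+2) (zs - Z k.+2).
  by rewrite -dotNr opprB.
rewrite ex ez.
have := ler_wpM2l (ltW etap) jx; have := ler_wpM2l (ltW etap) jz.
nra.
Qed.

Definition Phi ws k := dot (W k.+1 - ws) (W k.+1 - ws)
  - 2 * eta * dot (M *m D k) (W k.+1 - ws) + eta * L * dot (D k) (D k).

Lemma Phi_bounds ws k :
  (1 - eta * L) * dot (W k.+1 - ws) (W k.+1 - ws) <= Phi ws k <=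
  2 * (dot (W k.+1 - ws) (W k.+1 - ws) + dot (D k) (D k)).
Proof.
rewrite /Phi; have := cross_bound M_bound (ltW Lp) (D k) (W k.+1 - ws).
have := ler_norm (dot (M *m D k) (W k.+1 - ws)).
have := ler_norm (- dot (M *m D k) (W k.+1 - ws)); rewrite normrN.
have := dot_ge0 (D k); have := dot_ge0 (W k.+1 - ws).
move=> h1 h2 h3 h4 h5; apply/andP; split.
- have := ler_wpM2l (ltW etap) h5; have := ler_wpM2l (ltW etap) h4.
  by have := etaL_half; nra.
- have := ler_wpM2l (ltW etap) h5; have := ler_wpM2l (ltW etap) h3.
  by have := etaL_half; have := mulr_gt0 etap Lp; nra.
Qed.

Lemma Phi_ge0 ws k : 0 <= Phi ws k.
Proof.
have /andP[+ _] := Phi_bounds ws k; apply: le_trans.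
by apply: mulr_ge0; [have := etaL_half; lra | exact: dot_ge0].
Qed.

Section KKTCentre.
Variables (xs : 'cV[R]_n) (zs : 'cV[R]_m) (ys : 'cV[R]_p).
Hypothesis kkt : kkt_point f g A B c xs zs ys.
Let ws := col_mx (col_mx xs zs) ys.

Lemma Phi_step k : Phi ws k.+1 + (1 - 2 * eta * L) * dot (D k.+1) (D k.+1) <= Phi ws k.
Proof.
have e : W k.+1 - ws + D k.+1 = W k.+2 - ws by rewrite /D addrC addrA subrK.
have := @lyap_step _ _ M L (@M0_skew _ _ _ _ A B) M_bound (ltW Lp) eta
  (W k.+1 - ws) (D k) (D k.+1) etap.
by rewrite e => /(_ (step_monotone kkt k)); rewrite /Phi; lra.
Qed.

Lemma Phi_nonincreasing i j : (i <= j)%N -> Phi ws j <= Phi ws i.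
Proof.
move=> /subnK <-; elim: (j - i)%N => [|q ih] //=.
apply: le_trans ih; rewrite addSn.
have := Phi_step (q + i); have := dot_ge0 (D (q + i).+1).
by have := etaL_half; nra.
Qed.

Lemma D_vanishes e : 0 < e -> exists N, forall k, (N <= k)%N -> enorm (D k) <= e.
Proof.
move=> e0; have dp : 0 < 1 - 2 * eta * L by have := etaL_half; lra.
have [N HN] := nonincreasing_gaps_small (fun k => Phi_nonincreasing (leqnSn k))
   (Phi_ge0 ws) (mulr_gt0 dp (exprn_gt0 2 e0)).
exists N.+1 => -[//|k] Nk; apply: enorm_le_sq; first exact: ltW.
have := HN k Nk; have := Phi_step k => h1 h2.
have : (1 - 2 * eta * L) * dot (D k.+1) (D k.+1) <= (1 - 2 * eta * L) * e ^+ 2 by lra.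
by rewrite ler_pM2l.
Qed.

Lemma W_bounded : exists C, forall j, enorm (W j.+1) <= C.
Proof.
exists (Num.sqrt (2 * Phi ws 0) + enorm ws) => j.
rewrite -(subrK ws (W j.+1)); apply: le_trans (enormD _ _) _; rewrite lerD2r.
apply: enorm_le_sq; first exact: sqrtr_ge0.
rewrite sqr_sqrtr; last by rewrite mulr_ge0 // Phi_ge0.
have /andP[h1 _] := Phi_bounds ws j; have := Phi_nonincreasing (leq0n j).
by have := etaL_half; have := dot_ge0 (W j.+1 - ws); nra.
Qed.

(* Once some late iterate is close to ws, Phi centred at ws is small and
   stays small, so all later iterates remain close to ws. *)
Lemma W_converges_of_cluster :
  (forall d : R, 0 < d -> forall N, exists k, (N <= k)%N /\ enorm (W k.+1 - ws) <= d) ->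
  forall e, 0 < e -> exists N, forall j, (N <= j)%N -> enorm (W j.+1 - ws) <= e.
Proof.
move=> fr e e0; pose q := e / 3.
have q0 : 0 < q by rewrite divr_gt0.
have [ND HD] := D_vanishes q0.
have [k [Nk Hk]] := fr _ q0 ND.
exists k => j kj; apply: enorm_le_sq; first exact: ltW.
have h1 := Phi_nonincreasing kj; have /andP[h2 _] := Phi_bounds ws j.
have /andP[_ h3] := Phi_bounds ws k.
have a1 : dot (W k.+1 - ws) (W k.+1 - ws) <= q ^+ 2.
  by rewrite -enorm_sq lerXn2r ?nnegrE ?enorm_ge0 ?(ltW q0).
have a2 : dot (D k) (D k) <= q ^+ 2.
  by rewrite -enorm_sq lerXn2r ?nnegrE ?enorm_ge0 ?(ltW q0) ?HD.
have eq : e = 3 * q by rewrite /q mulrC divfK.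
have := etaL_half; have := dot_ge0 (W j.+1 - ws); have := mulr_gt0 etap Lp.
by rewrite eq; nra.
Qed.

End KKTCentre.

(* Stated for a
   generic block (C, U) so it serves both the x- and the z-block. *)
Lemma prox_residual_bound k (C : 'M[R]_(p, k)) (U : nat -> 'cV[R]_k) yb j d :
  (forall y, enorm (C^T *m y) <= L * enorm y) ->
  enorm (U j.+2 - U j.+1) <= d -> enorm (Y j.+1 - yb) <= 2 * d ->
  enorm (Y j.+1 - Y j) <= d ->
  enorm (U j.+1 - (2 * eta) *: (C^T *m Y j.+1) + eta *: (C^T *m Y j) - U j.+2
         + eta *: (C^T *m yb)) <= (1 + 3 * eta * L) * d.
Proof.
move=> CT hU hY1 hY2.
have -> : U j.+1 - (2 * eta) *: (C^T *m Y j.+1) + eta *: (C^T *m Y j) - U j.+2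
    + eta *: (C^T *m yb) = - (U j.+2 - U j.+1) - eta *: (C^T *m (Y j.+1 - yb))
    - eta *: (C^T *m (Y j.+1 - Y j)).
  by rewrite !mulmxBr; apply/matrixP => i l; rewrite !mxE; ring.
have e2 := le_trans (CT _) (ler_wpM2l (ltW Lp) hY1).
have e3 := le_trans (CT _) (ler_wpM2l (ltW Lp) hY2).
apply: le_trans (enormB _ _) _; apply: le_trans (lerD (enormB _ _) (lexx _)) _.
rewrite enormN !enormZ (ger0_norm (ltW etap)).
by have := ler_wpM2l (ltW etap) e2; have := ler_wpM2l (ltW etap) e3; lra.
Qed.

Section ClusterPoint.
Variables (xb : 'cV[R]_n) (zb : 'cV[R]_m) (yb : 'cV[R]_p).
Let wb := col_mx (col_mx xb zb) yb.
Hypothesis close : forall d, 0 < d -> exists k,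
  [/\ enorm (W k.+2 - wb) <= d, enorm (D k.+1) <= d & enorm (D k) <= d].

Lemma close_W1 k d : enorm (W k.+2 - wb) <= d -> enorm (D k.+1) <= d ->
  enorm (W k.+1 - wb) <= 2 * d.
Proof.
move=> h1 h2; have -> : W k.+1 - wb = (W k.+2 - wb) - D k.+1.
  by apply/matrixP => i j; rewrite /D !mxE; ring.
by apply: le_trans (enormB _ _) _; lra.
Qed.

Lemma cluster_feasible : A *m xb + B *m zb = c.
Proof.
have [_ _ AB] := M0_block_bounds M_bound.
apply/eqP; rewrite -subr_eq0; apply/eqP/enorm_eq0/eqP.
rewrite eq_le enorm_ge0 andbT.
have Kp : 0 <= (1 + 3 * eta * L) / eta.
  by rewrite divr_ge0 ?ltW //; have := mulr_gt0 etap Lp; lra.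
apply: (le0_of_le_scaled Kp) => d d0.
have [k [h1 h2 h3]] := close d0.
have E : eta *: (A *m xb + B *m zb - c) = (Y k.+2 - Y k.+1)
   - eta *: (A *m (X k.+1 - X k) + B *m (Z k.+1 - Z k))
   - eta *: (A *m (X k.+1 - xb) + B *m (Z k.+1 - zb)).
  by rewrite HY !mulmxBr; apply/matrixP => i j; rewrite !mxE; ring.
have b1 : enorm (Y k.+2 - Y k.+1) <= d.
  by have [_ _ hy] := W_dist_blocks k.+2 (X k.+1) (Z k.+1) (Y k.+1); exact: le_trans hy h2.
have b2 : enorm (A *m (X k.+1 - X k) + B *m (Z k.+1 - Z k)) <= L * d.
  apply: le_trans (AB _ _ (Y k.+1 - Y k)) _.
  by rewrite -!col_sub; apply: ler_wpM2l => //; exact: ltW.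
have b3 : enorm (A *m (X k.+1 - xb) + B *m (Z k.+1 - zb)) <= L * (2 * d).
  apply: le_trans (AB _ _ (Y k.+1 - yb)) _.
  by rewrite -!col_sub; apply: ler_wpM2l; [exact: ltW | exact: close_W1].
have : enorm (eta *: (A *m xb + B *m zb - c)) <= d + eta * (L * d) + eta * (L * (2 * d)).
  rewrite E; apply: le_trans (enormB _ _) _; apply: lerD.
    apply: le_trans (enormB _ _) _; apply: lerD => //.
    by rewrite enormZ (ger0_norm (ltW etap)) ler_pM2l.
  by rewrite enormZ (ger0_norm (ltW etap)) ler_pM2l.
rewrite enormZ (ger0_norm (ltW etap)) => H.
by rewrite mulrAC ler_pdivlMr //; nra.
Qed.

Lemma cluster_subgrad_f x : f x \is a fin_num ->
  (f xb <= (fine (f x) + dot (A^T *m yb) (x - xb))%:E)%E.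
Proof.
move=> fx; have [AT _ _] := M0_block_bounds M_bound.
have K0 : 0 <= 1 + 3 * eta * L by have := mulr_gt0 etap Lp; lra.
apply: (@prox_limit _ _ f eta _ xb (A^T *m yb) hf etap K0 _ x fx) => d d0.
have [k [h1 h2 h3]] := close d0.
have [x1 _ _] := W_dist_blocks k.+2 xb zb yb.
have [x2 _ _] := W_dist_blocks k.+2 (X k.+1) (Z k.+1) (Y k.+1).
have [_ _ y1] := W_dist_blocks k.+1 xb zb yb.
have [_ _ y2] := W_dist_blocks k.+1 (X k) (Z k) (Y k).
exists (X k.+1 - (2 * eta) *: (A^T *m Y k.+1) + eta *: (A^T *m Y k)), (X k.+2).
split; [exact: HX | exact: le_trans x1 h1 | apply: prox_residual_bound AT _ _ _].
- exact: le_trans x2 h2.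
- exact: le_trans y1 (close_W1 h1 h2).
- exact: le_trans y2 h3.
Qed.

Lemma cluster_subgrad_g z : g z \is a fin_num ->
  (g zb <= (fine (g z) + dot (B^T *m yb) (z - zb))%:E)%E.
Proof.
move=> gz; have [_ BT _] := M0_block_bounds M_bound.
have K0 : 0 <= 1 + 3 * eta * L by have := mulr_gt0 etap Lp; lra.
apply: (@prox_limit _ _ g eta _ zb (B^T *m yb) hg etap K0 _ z gz) => d d0.
have [k [h1 h2 h3]] := close d0.
have [_ z1 _] := W_dist_blocks k.+2 xb zb yb.
have [_ z2 _] := W_dist_blocks k.+2 (X k.+1) (Z k.+1) (Y k.+1).
have [_ _ y1] := W_dist_blocks k.+1 xb zb yb.
have [_ _ y2] := W_dist_blocks k.+1 (X k) (Z k) (Y k).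
exists (Z k.+1 - (2 * eta) *: (B^T *m Y k.+1) + eta *: (B^T *m Y k)), (Z k.+2).
split; [exact: HZ | exact: le_trans z1 h1 | apply: prox_residual_bound BT _ _ _].
- exact: le_trans z2 h2.
- exact: le_trans y1 (close_W1 h1 h2).
- exact: le_trans y2 h3.
Qed.

(* A real subgradient inequality forces finiteness, so wb is a KKT point. *)
Lemma cluster_kkt : kkt_point f g A B c xb zb yb.
Proof.
have [[fN [x0 fx0]] _ _] := hf; have [[gN [z0 gz0]] _ _] := hg.
have fxb : f xb \is a fin_num.
  rewrite fin_numE fN /=; apply/negP => /eqP E.
  by have := cluster_subgrad_f fx0; rewrite E leye_eq.
have gzb : g zb \is a fin_num.
  rewrite fin_numE gN /=; apply/negP => /eqP E.
  by have := cluster_subgrad_g gz0; rewrite E leye_eq.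
split => //; first exact: cluster_feasible.
  by move=> x fx; have := cluster_subgrad_f fx; rewrite -(fineK fxb) lee_fin.
by move=> z gz; have := cluster_subgrad_g gz; rewrite -(fineK gzb) lee_fin.
Qed.

End ClusterPoint.

(* Bounded iterates have a cluster point; it is a KKT point; centring Phi
   there gives convergence of the whole sequence. *)
Lemma iterates_converge : has_saddle_point f g A B c -> exists xs zs,
  X @ \oo --> xs /\ Z @ \oo --> zs /\ is_solution f g A B c xs zs.
Proof.
move=> saddle; have [fp _ _] := hf; have [gp _ _] := hg.
have [xs [zs [ys kkt]]] := saddle_kkt fp gp saddle.
have [C HC] := W_bounded kkt.
have [wb cluster] := bounded_cluster_point HC.
pose xb := usubmx (usubmx wb); pose zb := dsubmx (usubmx wb); pose yb := dsubmx wb.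
have wbE : wb = col_mx (col_mx xb zb) yb by rewrite /xb /zb /yb !vsubmxK.
rewrite wbE in cluster.
have close d : 0 < d -> exists k, [/\ enorm (W k.+2 - col_mx (col_mx xb zb) yb) <= d,
    enorm (D k.+1) <= d & enorm (D k) <= d].
  move=> d0; have [ND HD] := D_vanishes kkt d0.
  have [[|k] [Nk Hk]] := cluster d d0 ND.+1 => //.
  by exists k; split => //; apply: HD => //; exact: leqW.
have kkt_b := cluster_kkt close.
have conv := W_converges_of_cluster kkt_b cluster.
exists xb, zb; split; last split.
- rewrite -cvg_shiftS; apply: cvg_enorm => e e0; have [N HN] := conv e e0.
  exists N => j Nj; have [h _ _] := W_dist_blocks j.+1 xb zb yb.
  exact: le_trans h (HN j Nj).
- rewrite -cvg_shiftS; apply: cvg_enorm => e e0; have [N HN] := conv e e0.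
  exists N => j Nj; have [_ h _] := W_dist_blocks j.+1 xb zb yb.
  exact: le_trans h (HN j Nj).
- exact: (kkt_solution fp gp kkt_b).
Qed.

End Iteration.

(* Sequences are shifted by one: X k = x_(k-1), so X 0 = x_(-1), X 1 = x_0. *)
Theorem corollary1 (R : realType) (n m p : nat)
    (f : 'cV[R]_n -> \bar R) (g : 'cV[R]_m -> \bar R)
    (A : 'M[R]_(p, n)) (B : 'M[R]_(p, m)) (c : 'cV[R]_p)
    (L eta : R)
    (X : nat -> 'cV[R]_n) (Z : nat -> 'cV[R]_m) (Y : nat -> 'cV[R]_p) :
  pcc f -> pcc g ->
  has_saddle_point f g A B c ->
  0 < L -> spec_norm (M0 A B) <= L ->
  0 < eta -> eta < (2 * L)^-1 ->
  (forall k, is_prox_point f eta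
      (X k.+1 - (2 * eta) *: (A^T *m Y k.+1) + eta *: (A^T *m Y k)) (X k.+2)) ->
  (forall k, is_prox_point g eta
      (Z k.+1 - (2 * eta) *: (B^T *m Y k.+1) + eta *: (B^T *m Y k)) (Z k.+2)) ->
  (forall k, Y k.+2 = Y k.+1 + (2 * eta) *: (A *m X k.+1) + (2 * eta) *: (B *m Z k.+1)
                      - eta *: (A *m X k) - eta *: (B *m Z k) - eta *: c) ->
  exists (xs : 'cV[R]_n) (zs : 'cV[R]_m),
    X @ \oo --> xs /\ Z @ \oo --> zs /\ is_solution f g A B c xs zs.
Proof.
move=> hf hg saddle Lp hL etap etaL HX HZ HY.
exact: (iterates_converge hf hg Lp hL etap etaL HX HZ HY saddle).
Qed.
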